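(* Let $G$ be ${\mathbb Z}_{\geq 0}$ or ${\mathbb Z}$. Let $X,Y$ be compact Hausdorff spaces and $T:X\to X$, $S:Y\to Y$ surjective continuous maps (homeomorphisms if $G={\mathbb Z}$). Then for every $k\in{\mathbb N}$, \[{\rm IE}_k(X\times Y,T\times S)={\rm IE}_k(X,T)\times{\rm IE}_k(Y,S),\] where $(X\times Y)^k$ is identified with $X^k\times Y^k$ in the natural way.
   Context: For a compact Hausdorff space $Z$ with surjective continuous map $R$ and $G$ acting by $n\cdot z=R^nz$: for a tuple $(A_1,\dots,A_k)$ of subsets of $Z$, a set $J\subseteq G$ is an independence set if for every nonempty finite $I\subseteq J$ and every $\sigma:I\to\{1,\dots,k\}$, $\bigcap_{s\in I}R^{-s}A_{\sigma(s)}\neq\emptyset$. A set $I\subseteq{\mathbb Z}$ has positive density if $\lim_{n}|I\cap\{-n,\dots,n\}|/(2n+1)$ exists and is nonzero; $I\subseteq{\mathbb Z}_{\ge0}$ has positive density if $\lim_n|I\cap\{0,\dots,n\}|/(n+1)$ exists and is nonzero. ${\rm IE}_k(Z,R)$ is the set of tuples $(z_1,\dots,z_k)\in Z^k$ such that for every product neighbourhood $U_1\times\cdots\times U_k$ of it, $(U_1,\dots,U_k)$ has an independence set of positive density. *)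

From HB Require Import structures.
From mathcomp Require Import all_boot all_order all_algebra.
From mathcomp Require Import all_classical all_reals all_analysis.
From mathcomp Require Import Rstruct Rstruct_topology.
Set Implicit Arguments. Unset Strict Implicit. Unset Printing Implicit Defensive.
Import Order.TTheory GRing.Theory Num.Theory.
Local Open Scope classical_set_scope.
Local Open Scope ring_scope.

(* The acting group G is Z (isZ = true) or Z_{>=0} (isZ = false),
   both viewed as subsets of int. *)
Definition inG (isZ : bool) : set int := fun n => isZ \/ (0 <= n).

(* R^{-s} A := the preimage of A under R^s, for s : int.  For s >= 0 it is
   the preimage under the s-th iterate; for s < 0 (only used when R is a
   bijection, G = Z) R^s = (R^{-1})^{|s|}, whose preimage of A is R^{|s|}(A). *)
Definition preim_pow (Z : Type) (R : Z -> Z) (s : int) (A : set Z) : set Z :=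
  if 0 <= s then (iter `|s|%N R) @^-1` A else (iter `|s|%N R) @` A.

Definition indep_set (isZ : bool) (Z : Type) (R : Z -> Z) (k : nat)
  (A : 'I_k -> set Z) (J : set int) : Prop :=
  J `<=` inG isZ /\
  forall (I : seq int) (sigma : int -> 'I_k),
    I != [::] -> {subset I <= J} ->
    exists z : Z, forall s, s \in I -> preim_pow R s (A (sigma s)) z.

Definition density_seq (isZ : bool) (I : set int) (n : nat) : Rdefinitions.R :=
  if isZ then
    (\sum_(i < (2 * n).+1) (`[< I ((i%:Z - n%:Z)%R) >] : nat))%:R / ((2 * n).+1)%:R
  else
    (\sum_(i < n.+1) (`[< I i%:Z >] : nat))%:R / (n.+1)%:R.

Definition pos_density (isZ : bool) (I : set int) : Prop :=
  I `<=` inG isZ /\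
  exists l : Rdefinitions.R, density_seq isZ I n @[n --> \oo] --> l /\ l != 0.

Definition IE (isZ : bool) (Z : topologicalType) (R : Z -> Z) (k : nat) :
  set ('I_k -> Z) :=
  fun z => forall U : 'I_k -> set Z, (forall i, nbhs (z i) (U i)) ->
    exists J, indep_set isZ R U J /\ pos_density isZ J.

Definition system (isZ : bool) (Z : topologicalType) (R : Z -> Z) : Prop :=
  [/\ hausdorff_space Z, compact [set: Z], continuous R,
      (forall y, exists x, R x = y) &
      (isZ -> exists Rinv : Z -> Z,
          [/\ cancel R Rinv, cancel Rinv R & continuous Rinv])].
Arguments IE isZ {Z} R k _.

(* The key notion is dense independence of a tuple (U_i): for all large m,
   some independence set inside [0, m) has at least m / d elements.  An
   independence set of positive density gives it by cutting out windows.
   Conversely, the finite independence sets form a family that is hereditary,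
   translation invariant and determined by its finite parts; the maximal size
   a(n) of such a set inside [0, n) is subadditive, so a(n)/n tends to its
   infimum (Fekete), which dense independence makes positive, and a compactness
   argument on nearly optimal prefixes yields an independence set of N whose
   density is exactly that infimum.  Dense independence passes to products:
   averaging over translates, some translate of a finite independence set for
   (V_i) meets one for (U_i) in a fixed proportion of its points, and the
   intersection is independent for (U_i x V_i).  The reverse inclusion holds
   because IE is preserved by factor maps such as the coordinate projections. *)
From HB Require Import structures.
From mathcomp Require Import all_boot all_order all_algebra.
From mathcomp Require Import all_classical all_reals all_analysis.
From mathcomp Require Import Rstruct Rstruct_topology.
From mathcomp Require Import zify ring lra.
Set Implicit Arguments. Unset Strict Implicit. Unset Printing Implicit Defensive.
Import Order.TTheory GRing.Theory Num.Theory numFieldNormedType.Exports.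
Local Open Scope classical_set_scope.

Definition count_below (P : nat -> bool) (n : nat) : nat := \sum_(i < n) P i.

Lemma count_below_le P n : count_below P n <= n.
Proof.
rewrite -[leqRHS]card_ord -sum1_card.
by apply: leq_sum => i _; case: (P i).
Qed.

Lemma count_belowD P m n :
  count_below P (m + n) = count_below P m + count_below (fun i => P (m + i)) n.
Proof. exact: big_split_ord. Qed.

Lemma eq_count_below P Q n :
  (forall i, i < n -> P i = Q i) -> count_below P n = count_below Q n.
Proof. by move=> PQ; apply: eq_bigr => i _; rewrite PQ. Qed.

Lemma count_below_mono P m n : m <= n -> count_below P m <= count_below P n.
Proof. by move=> /subnKC <-; rewrite count_belowD leq_addr. Qed.

Lemma nbhs_agree_below (J : cantor_space) n :
  nbhs J [set f : cantor_space | forall i, i < n -> f i = J i].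
Proof.
elim: n => [|n IH]; first by apply: filterS filterT.
have Jn : nbhs J (proj n @^-1` [set J n]).
  by apply: proj_continuous; rewrite nbhs_principalE; apply/principal_filterP.
apply: filterS (filterI IH Jn) => f [fJ fn] i; rewrite ltnS leq_eqVlt.
by case/orP => [/eqP -> | /fJ].
Qed.

(* Koenig's lemma, as compactness of the Cantor space. *)
Lemma cantor_cluster_seq (P : nat -> nat -> bool) :
  exists J : nat -> bool, forall n j0,
    exists2 j, j0 <= j & forall i, i < n -> P j i = J i.
Proof.
have [J [_ clJ]] := @cantor_space_compact (P @ \oo) _ filterT.
exists J => n j0.
have tail : (P @ \oo) [set P j | j in [set j | j0 <= j]].
  by exists j0 => // j hj; exists j.
by have [_ [[j hj <-] agree]] := clJ _ _ tail (nbhs_agree_below J n); exists j.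
Qed.

Section Fekete.
Variables (R : realType) (a : nat -> nat).
Hypothesis a_subadd : forall m n, a (m + n) <= a m + a n.
Hypothesis a_le : forall n, a n <= n.
Local Open Scope ring_scope.

Definition growth_rate : R := inf [set (a n)%:R / n%:R | n in [set n | (0 < n)%N]].

Let rates_lbound : has_lbound [set (a n)%:R / n%:R :> R | n in [set n | (0 < n)%N]].
Proof. by exists 0 => _ [n _ <-]; exact: divr_ge0. Qed.

Let rates_nonempty : [set (a n)%:R / n%:R :> R | n in [set n | (0 < n)%N]] !=set0.
Proof. by exists ((a 1)%:R / 1%:R), 1%N. Qed.

Lemma growth_rate_ge (c : R) :
  (forall n, (0 < n)%N -> c * n%:R <= (a n)%:R) -> c <= growth_rate.
Proof.
move=> ca; apply: lb_le_inf rates_nonempty _.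
by move=> _ [n n0 <-]; rewrite ler_pdivlMr ?ltr0n // ca.
Qed.

Lemma growth_rate_ge0 : 0 <= growth_rate.
Proof. by apply: growth_rate_ge => n _; rewrite mul0r. Qed.

Lemma growth_rate_le n : growth_rate * n%:R <= (a n)%:R.
Proof.
case: n => [|n]; first by rewrite mulr0.
by rewrite -ler_pdivlMr ?ltr0n //; apply: (ge_inf rates_lbound); exists n.+1.
Qed.

Lemma subadd_mul q m : (a (q * m) <= q * a m)%N.
Proof.
elim: q => [|q IH]; first by have := a_le 0; rewrite mul0n leqn0 => /eqP ->.
by rewrite !mulSn; apply: leq_trans (a_subadd _ _) _; rewrite leq_add2l.
Qed.

Lemma subadd_divn m n : (0 < m)%N -> (a n <= n %/ m * a m + m)%N.
Proof.
move=> m0; rewrite {1}(divn_eq n m); apply: leq_trans (a_subadd _ _) _.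
apply: leq_add; first exact: subadd_mul.
by apply: leq_trans (a_le _) (ltnW _); rewrite ltn_mod.
Qed.

Lemma growth_rate_cvg : (a n)%:R / n%:R @[n --> \oo] --> growth_rate.
Proof.
apply/cvgrPdist_le => e e0.
have e20 : 0 < e / 2 by rewrite divr_gt0.
have [_ [m m0 <-] am] := inf_adherent e20 (conj rates_nonempty rates_lbound).
have {}am : (a m)%:R <= (growth_rate + e / 2) * m%:R.
  by rewrite -ler_pdivrMr ?ltr0n // ltW.
near=> n.
have n0 : (0 < n)%N by near: n; exists 1%N.
have lo : growth_rate <= (a n)%:R / n%:R by rewrite ler_pdivlMr ?ltr0n // growth_rate_le.
rewrite ler_distlC (le_trans _ lo) /=; last by rewrite lerBlDr lerDl ltW.
rewrite ler_pdivrMr ?ltr0n //.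
have mn : m%:R <= e / 2 * n%:R.
  rewrite -ler_pdivrMl //; near: n; exists (Num.truncn (m%:R / (e / 2))).+1 => // n /=.
  by move=> tn; rewrite mulrC; apply/ltW/(lt_le_trans (truncnS_gt _)); rewrite ler_nat.
have qm : (n %/ m)%N%:R * m%:R <= n%:R :> R by rewrite -natrM ler_nat leq_divM.
apply: (le_trans (y := (n %/ m)%N%:R * (a m)%:R + m%:R)).
  by rewrite -natrM -natrD ler_nat subadd_divn.
have := ler_wpM2l (ler0n _ (n %/ m)%N) am.
have := ler_wpM2l (addr_ge0 growth_rate_ge0 (ltW e20)) qm.
move: mn; set q := (n %/ m)%N%:R; set A := (a m)%:R; nra.
Unshelve. all: by end_near. Qed.

Lemma growth_rate_tail (e : R) B : 0 < e ->
  exists2 N, (B <= N)%N & forall n, (n <= N)%N ->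
    (growth_rate - e) * n%:R <= (a N)%:R - (a (N - n))%:R.
Proof.
(* N maximises a m - (growth_rate - e) m on [0, M]; M is chosen large enough to force B <= N. *)
move=> e0; pose h m := (a m)%:R - (growth_rate - e) * m%:R.
pose M := (Num.truncn ((1 + e) * B%:R / e)).+1.
have [N _ Nmax] := @arg_maxP _ _ 'I_M.+1 ord0 xpredT (fun i => h i) isT.
have hM : (1 + e) * B%:R <= h M.
  rewrite /h mulrBl opprB addrCA; apply: ler_wpDr; first by rewrite subr_ge0 growth_rate_le.
  by rewrite -ler_pdivrMl // mulrC ltW // truncnS_gt.
have hN : h M <= h N := Nmax ord_max isT.
exists N.
  rewrite leqNgt; apply/negP => NB; move: hN; apply/negP; rewrite -ltNge.
  apply: lt_le_trans hM; apply: (@le_lt_trans _ _ ((1 + e) * N%:R)).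
    have := mulr_ge0 growth_rate_ge0 (ler0n R N).
    have : (a N)%:R <= N%:R :> R by rewrite ler_nat.
    rewrite /h; lra.
  by rewrite ltr_pM2l ?ltr_nat // addr_gt0.
move=> n nN; have NnM : (N - n < M.+1)%N by rewrite ltnS (leq_trans (leq_subr _ _)) // -ltnS.
have := Nmax (inord (N - n)) isT; rewrite /h inordK // (natrB R nN) /=; nra.
Qed.

End Fekete.

Definition admissible (Ok : (nat -> bool) -> Prop) :=
  [/\ forall P Q, Ok P -> subpred Q P -> Ok Q,
      forall P b, Ok P -> Ok (fun i => P (b + i)) &
      forall P, (forall n, Ok (fun i => P i && (i < n))) -> Ok P].

Definition pos_max_density (Ok : (nat -> bool) -> Prop) :=
  exists d m0, 0 < d /\
    forall m, m0 <= m -> exists2 P, Ok P & m <= d * count_below P m.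

Section AdmissibleFamily.
Variable Ok : (nat -> bool) -> Prop.
Hypothesis Ok_sub : forall P Q, Ok P -> subpred Q P -> Ok Q.
Hypothesis Ok_shift : forall P b, Ok P -> Ok (fun i => P (b + i)).
Hypothesis Ok_finitary : forall P, (forall n, Ok (fun i => P i && (i < n))) -> Ok P.
Variables d m0 : nat.
Hypothesis d_gt0 : 0 < d.
Hypothesis Ok_dense :
  forall m, m0 <= m -> exists2 P, Ok P & m <= d * count_below P m.

Let attained n k := `[< exists2 P, Ok P & count_below P n = k >].

Let attained_exists n : exists k, attained n k.
Proof.
have [P OkP _] := Ok_dense (leqnn m0).
exists 0; apply/asboolP; exists (fun=> false); first exact: Ok_sub OkP _.
by rewrite /count_below big1.
Qed.

Let attained_le n k : attained n k -> k <= n.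
Proof. by move=> /asboolP [P _ <-]; exact: count_below_le. Qed.

Definition max_count n := ex_maxn (attained_exists n) (@attained_le n).

Lemma max_count_attained n : exists2 P, Ok P & count_below P n = max_count n.
Proof. by rewrite /max_count; case: ex_maxnP => k /asboolP. Qed.

Lemma count_below_le_max P n : Ok P -> count_below P n <= max_count n.
Proof.
rewrite /max_count; case: ex_maxnP => k _ kmax OkP.
by apply: kmax; apply/asboolP; exists P.
Qed.

Lemma max_count_le n : max_count n <= n.
Proof. by have [P _ <-] := max_count_attained n; exact: count_below_le. Qed.

Lemma count_below_tail P n N : Ok P -> n <= N ->
  count_below P N <= count_below P n + max_count (N - n).
Proof.
move=> OkP /subnKC {1}<-; rewrite count_belowD leq_add2l.
exact/count_below_le_max/Ok_shift.
Qed.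

Lemma max_count_subadd m n : max_count (m + n) <= max_count m + max_count n.
Proof.
have [P OkP <-] := max_count_attained (m + n).
apply: leq_trans (count_below_tail OkP (leq_addr n m)) _.
by rewrite addKn leq_add2r count_below_le_max.
Qed.

Lemma max_count_ge m : 0 < m -> m <= d * max_count m.
Proof.
move=> m_gt0; have [P OkP] := Ok_dense (ltnW (leq_pmulr m0.+1 m_gt0)).
move/leq_trans/(_ (leq_mul (leqnn d) (count_below_le_max _ OkP))).
move/leq_trans/(_ (leq_mul (leqnn d) (subadd_mul max_count_subadd max_count_le _ _))).
by rewrite mulnCA leq_pmul2l.
Qed.

Local Open Scope ring_scope.
Notation rate := (growth_rate Rdefinitions.R max_count).

Lemma rate_gt0 : 0 < rate.
Proof.
apply: lt_le_trans (_ : d%:R^-1 <= _); first by rewrite invr_gt0 ltr0n.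
apply: growth_rate_ge => n n_gt0.
by rewrite mulrC ler_pdivrMr ?ltr0n // -natrM ler_nat mulnC max_count_ge.
Qed.

Lemma exists_Ok_prefix_ge (e : Rdefinitions.R) B : 0 < e ->
  exists2 P, Ok P & exists2 N, (B <= N)%N &
    forall n, (n <= N)%N -> (rate - e) * n%:R <= (count_below P n)%:R.
Proof.
move=> e0; have [N BN tail] := growth_rate_tail max_count_le B e0.
have [P OkP PN] := max_count_attained N.
exists P => //; exists N => // n nN; apply: le_trans (tail n nN) _.
by rewrite lerBlDr -natrD ler_nat -PN count_below_tail.
Qed.

Lemma exists_Ok_density_rate :
  exists2 J, Ok J & (count_below J n)%:R / n%:R @[n --> \oo] --> rate.
Proof.
have rich j : exists P, Ok P /\ exists2 N, (j <= N)%N & forall n, (n <= N)%N ->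
    (rate - j.+1%:R^-1) * n%:R <= (count_below P n)%:R.
  have e0 : 0 < j.+1%:R^-1 :> Rdefinitions.R by rewrite invr_gt0.
  have [P OkP PN] := exists_Ok_prefix_ge j e0.
  by exists P.
have [f fP] := choice rich.
(* J is a cluster point of the f j, which are nearly optimal on ever longer prefixes. *)
have [J Jcl] := cantor_cluster_seq f.
have OkJ : Ok J.
  apply: Ok_finitary => n; have [j _ agree] := Jcl n 0%N.
  by apply: Ok_sub (fP j).1 _ => i /andP [Ji /agree ->].
have J_ge n : rate * n%:R <= (count_below J n)%:R.
  apply/ler_addgt0Pr => e e0.
  have [j jn agree] := Jcl n (maxn n (Num.truncn (n%:R / e))).
  have [_ [N jN fj]] := fP j.
  have := fj n (leq_trans (leq_trans (leq_maxl _ _) jn) jN).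
  rewrite (eq_count_below agree) mulrBl lerBlDr => /le_trans; apply; rewrite lerD2l.
  rewrite mulrC ler_pdivrMr ?ltr0n // -ler_pdivrMl // mulrC.
  apply/ltW/(lt_le_trans (truncnS_gt _)); rewrite ler_nat ltnS.
  exact: leq_trans (leq_maxr _ _) jn.
exists J => //.
apply: (@squeeze_cvgr _ _ _ _ (fun=> rate) (fun n => (max_count n)%:R / n%:R)).
- near=> n; have n0 : (0 < n)%N by near: n; exists 1%N.
  rewrite ler_pdivlMr ?ltr0n // J_ge /=.
  by rewrite ler_pM2r ?invr_gt0 ?ltr0n // ler_nat count_below_le_max.
- exact: cvg_cst.
- exact: growth_rate_cvg max_count_subadd max_count_le.
Unshelve. all: by end_near. Qed.

End AdmissibleFamily.

Lemma admissible_density_member Ok : admissible Ok -> pos_max_density Ok ->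
  exists2 J, Ok J & exists2 l : Rdefinitions.R, (0 < l)%R &
    ((count_below J n)%:R / n%:R)%R @[n --> \oo] --> l.
Proof.
case=> sub shift fin [d [m0 [d_gt0 dense]]].
have [J OkJ Jl] := exists_Ok_density_rate sub shift fin dense.
by exists J => //; exists (growth_rate _ (max_count sub dense)); first exact: rate_gt0.
Qed.

Section ForwardIndependence.
Variables (Z : Type) (R : Z -> Z) (k : nat).

Definition indep_nat (A : 'I_k -> set Z) (P : nat -> bool) : Prop :=
  forall (I : seq nat) (sigma : nat -> 'I_k), I != [::] -> all P I ->
    exists z, forall s, s \in I -> A (sigma s) (iter s R z).

Lemma admissible_indep_nat A : admissible (indep_nat A).
Proof.
split.
- move=> P Q OkP QP I sg I0 IQ; apply: OkP I0 _.
  by apply/allP => s /(allP IQ); exact: QP.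
- move=> P b OkP I sg I0 IP.
  have bI0 : map (addn b) I != [::] by case: I I0 IP.
  have bIP : all P (map (addn b) I) by rewrite all_map.
  have [z Hz] := OkP _ (fun t => sg (t - b)) bI0 bIP.
  exists (iter b R z) => s sI; have := Hz (b + s) (map_f _ sI).
  by rewrite addKn -iterD addnC.
- move=> P OkP I sg I0 IP; apply: (OkP (\max_(s <- I) s).+1) I0 _.
  by apply/allP => s sI; rewrite (allP IP s sI) ltnS /= leq_bigmax_seq.
Qed.

End ForwardIndependence.

Lemma sum_count_below_shift F Q m M :
  count_below F m * (count_below Q M - m) <=
  \sum_(b < M) count_below (fun i => F i && Q (b + i)) m.
Proof.
rewrite /count_below exchange_big big_distrl /=; apply: leq_sum => i _.
case: (F i) => //=; rewrite mul1n -[\sum_(j < M) Q j]/(count_below Q M).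
have -> : \sum_(b < M) Q (b + i) = count_below (fun b => Q (i + b)) M.
  by apply: eq_bigr => b _; rewrite addnC.
have := count_belowD Q i M; have := count_below_le Q i.
have := count_below_mono Q (leq_addl i M); have := ltn_ord i; lia.
Qed.

Lemma exists_ge_mean M (x : nat -> nat) K : 0 < M ->
  K <= \sum_(b < M) x b -> exists2 b, b < M & K <= M * x b.
Proof.
case: M => // M _.
have [b xb] : {b : 'I_M.+1 | \max_(j < M.+1) x j = x b} by apply: bigop.eq_bigmax; rewrite card_ord.
have : \sum_(j < M.+1) x j <= \sum_(j < M.+1) \max_(i < M.+1) x i.
  by apply: leq_sum => j _; exact: leq_bigmax.
rewrite sum_nat_const card_ord xb => /(leq_trans _) Kle /Kle; by exists b.
Qed.

Section ProductSystem.
Variables (X Y : Type) (T : X -> X) (S : Y -> Y) (k : nat).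
Let TS (p : X * Y) := (T p.1, S p.2).

Lemma iter_pair n p : iter n TS p = (iter n T p.1, iter n S p.2).
Proof. by elim: n => [|n IH] /=; [case: p | rewrite IH]. Qed.

Lemma indep_nat_prod (U : 'I_k -> set X) (V : 'I_k -> set Y) W P Q :
  (forall i, U i `*` V i `<=` W i) -> indep_nat T U P -> indep_nat S V Q ->
  indep_nat TS W (fun i => P i && Q i).
Proof.
move=> UVW indP indQ I sg I0 IPQ.
have [x Hx] : exists x, forall s, s \in I -> U (sg s) (iter s T x).
  by apply: indP I0 _; apply/allP => s /(allP IPQ) /andP[].
have [y Hy] : exists y, forall s, s \in I -> V (sg s) (iter s S y).
  by apply: indQ I0 _; apply/allP => s /(allP IPQ) /andP[].
by exists (x, y) => s sI; rewrite iter_pair; apply: UVW; split; [exact: Hx | exact: Hy].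
Qed.

Lemma pos_max_density_prod (U : 'I_k -> set X) (V : 'I_k -> set Y) W :
  (forall i, U i `*` V i `<=` W i) -> pos_max_density (indep_nat T U) ->
  pos_max_density (indep_nat S V) -> pos_max_density (indep_nat TS W).
Proof.
move=> UVW [d1 [m1 [d1_gt0 dense1]]] [d2 [m2 [d2_gt0 dense2]]].
exists (2 * d1 * d2), (m1 + m2).+1; split; first by rewrite !muln_gt0 d1_gt0 d2_gt0.
move=> m mm; pose M := 2 * d2 * m.
have [F indF Fm] := dense1 m (leq_trans (leq_addr m2 m1) (ltnW mm)).
have [Q indQ QM] := dense2 M (ltac:(rewrite /M; nia)).
have QM2 : m <= count_below Q M - m.
  by move: QM; set c := count_below Q M; rewrite /M [2 * d2]mulnC -mulnA leq_pmul2l //; lia.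
have M_gt0 : 0 < M by rewrite /M !muln_gt0 d2_gt0; lia.
pose FQ b i := F i && Q (b + i).
have [b _ Fb] := exists_ge_mean (x := fun b => count_below (FQ b) m) M_gt0
  (leq_trans (leq_mul (leqnn _) QM2) (sum_count_below_shift F Q m M)).
exists (FQ b).
  by apply: indep_nat_prod UVW indF _; have [_ shift _] := admissible_indep_nat S V; exact: shift.
move: Fb; rewrite /M -mulnA mulnCA (mulnC _ m) leq_pmul2l; last by lia.
by move: Fm; nia.
Qed.

End ProductSystem.

Local Open Scope ring_scope.

Definition int_set (J : nat -> bool) : set int := [set z | 0 <= z /\ J `|z|%N].

Lemma indep_set_int_set isZ Z (R : Z -> Z) k (A : 'I_k -> set Z) J :
  indep_nat R A J -> indep_set isZ R A (int_set J).
Proof.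
move=> indJ; split=> [z [z0 _]|I sg I0 IJ]; first by right.
have {}IJ s : s \in I -> int_set J s by move=> /IJ; rewrite inE.
have absI0 : map absz I != [::] by case: I I0 IJ.
have absIJ : all J (map absz I) by apply/allP => _ /mapP [s /IJ [_ Js] ->].
have [z Hz] := indJ _ (fun t => sg t%:Z) absI0 absIJ.
exists z => s sI; have [s0 _] := IJ s sI.
by rewrite /preim_pow s0; move: (Hz _ (map_f absz sI)); rewrite /= gez0_abs.
Qed.

Definition width (isZ : bool) (n : nat) : nat := if isZ then (2 * n).+1 else n.+1.

(* J translated so that the interval counted by [density_seq isZ J n] becomes [0, width isZ n). *)
Definition window (isZ : bool) (J : set int) (n i : nat) : bool :=
  `[< J (i%:Z - (if isZ then n else 0%N)%:Z) >].

Lemma density_seqE isZ J n : density_seq isZ J n =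
  (count_below (window isZ J n) (width isZ n))%:R / (width isZ n)%:R.
Proof. by case: isZ => //; congr (_%:R / _); apply: eq_bigr => i _; rewrite /window subr0. Qed.

Lemma int_setE J (i : nat) : `[< int_set J i%:Z >] = J i.
Proof. by apply/asboolP/idP => [[]//|Ji]; split. Qed.

Lemma count_window_int_set isZ J n :
  count_below (window isZ (int_set J) n) (width isZ n) = count_below J n.+1.
Proof.
case: isZ; last by apply: eq_count_below => i _; rewrite /window subr0 int_setE.
rewrite /width (_ : (2 * n).+1 = n + n.+1)%N; last by lia.
rewrite count_belowD [X in (X + _)%N]big1 ?add0n => [|i _]; last first.
  by rewrite /window asboolF // => -[]; rewrite subr_ge0 lez_nat leqNgt ltn_ord.
by apply: eq_count_below => i _; rewrite /window PoszD addrC addKr int_setE.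
Qed.

Lemma iter_can Z (f g : Z -> Z) n x : cancel f g -> iter n g (iter n f x) = x.
Proof. by move=> fK; elim: n => //= n IH; rewrite -iterS iterSr fK. Qed.

Lemma indep_nat_window (isZ : bool) Z (R : Z -> Z) k (A : 'I_k -> set Z) J n :
  (isZ -> exists Rinv, cancel R Rinv /\ cancel Rinv R) ->
  indep_set isZ R A J -> indep_nat R A (window isZ J n).
Proof.
move=> Rinv [_ indJ] I sg I0 IJ; set o := if isZ then n else 0%N.
have oI0 : map (fun i => i%:Z - o%:Z) I != [::] by case: I I0 IJ.
have oIJ : {subset map (fun i => i%:Z - o%:Z) I <= J}.
  by move=> _ /mapP [i /(allP IJ) /asboolP Ji ->]; rewrite inE.
have [z Hz] := indJ _ (fun s => sg (absz (s + o%:Z))) oI0 oIJ.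
have {}Hz i : i \in I -> preim_pow R (i%:Z - o%:Z) (A (sg i)) z.
  by move=> iI; have := Hz _ (map_f _ iI); rewrite subrK absz_nat.
rewrite /o in Hz; case: isZ {o IJ oI0 oIJ} Rinv Hz => [/(_ isT) [Rinv [RK RinvK]]|_] Hz; last first.
  by exists z => i /Hz; rewrite subr0 /preim_pow lez_nat absz_nat.
exists (iter n Rinv z) => i /Hz; rewrite /preim_pow subr_ge0 lez_nat.
case: leqP => [ni|ni].
  rewrite (_ : `|_|%N = (i - n)%N) /= => [Az|]; last by lia.
  by rewrite -[X in iter X R _](subnK ni) iterD iter_can.
case=> a Aa <-; rewrite (_ : `|_|%N = (n - i)%N); last by lia.
by rewrite -[X in iter X Rinv _](subnKC (ltnW ni)) iterD !iter_can.
Qed.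

Lemma width_ratio_cvg isZ :
  (n.+1)%:R / (width isZ n)%:R @[n --> \oo] --> (if isZ then 2^-1 else 1 : Rdefinitions.R).
Proof.
case: isZ => /=; last first.
  have -> : (fun n => (n.+1)%:R / (n.+1)%:R) = fun=> 1 :> Rdefinitions.R.
    by apply/funext => n; rewrite divff.
  exact: cvg_cst.
apply: (@squeeze_cvgr _ _ _ _ (fun=> 2^-1) (fun n => 2^-1 + harmonic n)).
- near=> n; rewrite /= ler_pdivlMr ?ler_pdivrMr ?ltr0n //.
  have h : 1 <= (n.+1)%:R^-1 * ((2 * n).+1)%:R :> Rdefinitions.R.
    by rewrite mulrC ler_pdivlMr ?ltr0n // mul1r ler_nat; lia.
  have e1 : ((2 * n).+1)%:R = 2 * n%:R + 1 :> Rdefinitions.R by rewrite -natr1 natrM.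
  move: h; rewrite e1 -natr1; set u := (n%:R + 1)^-1; lra.
- exact: cvg_cst.
- by rewrite -[X in _ --> X]addr0; apply: cvgD; [exact: cvg_cst | exact: cvg_harmonic].
Unshelve. all: by end_near. Qed.

Lemma pos_density_int_set isZ J (l : Rdefinitions.R) : 0 < l ->
  (count_below J n)%:R / n%:R @[n --> \oo] --> l -> pos_density isZ (int_set J).
Proof.
move=> l_gt0 Jl; split=> [z [z0 _]|]; first by right.
exists (l * (if isZ then 2^-1 else 1)); split; last first.
  by rewrite mulf_neq0 ?gt_eqF //; case: isZ; rewrite ?invr_eq0 ?oner_eq0.
have -> : density_seq isZ (int_set J) = fun n =>
    (count_below J n.+1)%:R / n.+1%:R * (n.+1%:R / (width isZ n)%:R).
  by apply/funext => n; rewrite density_seqE count_window_int_set mulrA divfK.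
by apply: cvgM; [move: Jl; rewrite -cvg_shiftS | exact: width_ratio_cvg].
Qed.

Lemma pos_max_density_indep (isZ : bool) Z (R : Z -> Z) k (U : 'I_k -> set Z) J :
  (isZ -> exists Rinv, cancel R Rinv /\ cancel Rinv R) ->
  indep_set isZ R U J -> pos_density isZ J -> pos_max_density (indep_nat R U).
Proof.
move=> Rinv indJ [_ [l [Jl l_neq0]]].
have l_gt0 : 0 < l.
  rewrite lt0r l_neq0; apply: ler_cvg_to (cvg_cst 0) Jl _.
  by near=> n; rewrite density_seqE divr_ge0.
have [N _ JN] : \forall n \near \oo, l / 2 <= density_seq isZ J n.
  by apply: (cvgr_ge l Jl); rewrite ltr_pdivrMr // ltr_pMr // ltr1n.
pose d := (Num.truncn (4 / l)).+1.
have dl : 4 < d%:R * l by rewrite -ltr_pdivrMr // truncnS_gt.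
exists d, ((2 * N).+2)%N; split=> [//|m Nm]; pose n := (m.-1 %/ 2)%N.
have /andP [wm mw] : (width isZ n <= m <= 2 * width isZ n)%N.
  by rewrite /n /width; case: (isZ); lia.
exists (window isZ J n); first exact: indep_nat_window.
have Nn : (N <= n)%N by rewrite /n; lia.
have := JN n Nn; rewrite density_seqE ler_pdivlMr; last by case: (isZ).
have := count_below_mono (window isZ J n) wm.
set c := count_below _ (width isZ n); set C := count_below _ m => cC lc.
rewrite -(ler_nat Rdefinitions.R) natrM -(ler_pM2l l_gt0).
have lm : l * m%:R <= l * (2 * (width isZ n)%:R) by rewrite ler_pM2l // -natrM ler_nat.
have dlC : 4 * C%:R <= d%:R * l * C%:R by rewrite ler_wpM2r // ltW.
have {}cC : c%:R <= C%:R :> Rdefinitions.R by rewrite ler_nat.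
lra.
Unshelve. all: by end_near. Qed.

Section FactorMap.
Variables (isZ : bool) (Z Z' : topologicalType) (R : Z -> Z) (R' : Z' -> Z').
Variable pi : Z -> Z'.
Hypothesis piR : forall x, pi (R x) = R' (pi x).

Lemma preim_pow_factor s A z :
  preim_pow R s (pi @^-1` A) z -> preim_pow R' s A (pi z).
Proof.
have piRn n x : pi (iter n R x) = iter n R' (pi x) by elim: n => //= n <-.
by rewrite /preim_pow; case: ifP => _ /=; [rewrite -piRn | case=> w Aw <-; exists (pi w)].
Qed.

Lemma IE_factor k z : continuous pi -> IE isZ R k z -> IE isZ R' k (pi \o z).
Proof.
move=> pi_cont Ez U Unbhs.
have [J [[JG indJ] Jd]] := Ez (fun i => pi @^-1` U i) (fun i => pi_cont _ _ (Unbhs i)).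
exists J; split=> //; split=> // I sg I0 IJ.
by have [x Hx] := indJ I sg I0 IJ; exists (pi x) => s /Hx /preim_pow_factor.
Qed.

End FactorMap.

Lemma system_invertible isZ (Z : topologicalType) (R : Z -> Z) : system isZ R ->
  isZ -> exists Rinv, cancel R Rinv /\ cancel Rinv R.
Proof. by case=> _ _ _ _ inv /inv [Rinv [RK RinvK _]]; exists Rinv. Qed.

Theorem theorem3p15 (isZ : bool) (X Y : topologicalType)
  (T : X -> X) (S : Y -> Y) (k : nat) :
  system isZ T -> system isZ S ->
  IE isZ (fun p : X * Y => (T p.1, S p.2)) k =
  [set z : 'I_k -> X * Y | IE isZ T k (fun i => (z i).1) /\
                           IE isZ S k (fun i => (z i).2)].
Proof.
move=> /system_invertible invT /system_invertible invS.
apply/seteqP; split=> z.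
  move=> Ez; split.
  - by apply: (IE_factor (pi := fst)) Ez => // p; exact: cvg_fst.
  - by apply: (IE_factor (pi := snd)) Ez => // p; exact: cvg_snd.
move=> [EX EY] W Wnbhs.
have boxW i : exists UV : set X * set Y,
    [/\ nbhs (z i).1 UV.1, nbhs (z i).2 UV.2 & UV.1 `*` UV.2 `<=` W i].
  by have [[U V] [/= Uz Vz] UVWi] := Wnbhs i; exists (U, V).
have [UV UVW] := choice boxW.
have [J1 [indJ1 J1d]] := EX (fun i => (UV i).1) (fun i => let: And3 h _ _ := UVW i in h).
have [J2 [indJ2 J2d]] := EY (fun i => (UV i).2) (fun i => let: And3 _ h _ := UVW i in h).
have dense := pos_max_density_prod (fun i => let: And3 _ _ h := UVW i in h)
  (pos_max_density_indep invT indJ1 J1d) (pos_max_density_indep invS indJ2 J2d).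
have [J indJ [l l_gt0 Jl]] := admissible_density_member (admissible_indep_nat _ _) dense.
by exists (int_set J); split; [exact: indep_set_int_set | exact: pos_density_int_set l_gt0 Jl].
Qed.
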